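(* Let $T$ be a normal spanning tree of a connected graph $G$ with $n$ vertices and $m$ edges. For any $\mathbf{0}\ne r=(r_1,\dots,r_{m-n+1})\in\mathbb{I}^{m-n+1}$, let $s=(2\pi-r_1,\dots,2\pi-r_{m-n+1})$ with entries taken modulo $2\pi$ (so $s\in\mathbb{I}^{m-n+1}$). Then $\mathcal{A}_T(r)$ and $\mathcal{A}_T(s)$ are $\mathbb{T}$-cospectral, i.e. all $\mathbb{T}$-gain graphs in $\mathcal{A}_T(r)\cup\mathcal{A}_T(s)$ have adjacency matrices with the same spectrum.
   Context: Graphs are finite, simple and undirected. $\mathbb{T}=\{z\in\mathbb{C}:|z|=1\}$, $\mathbb{I}=[0,2\pi)$, $\mathbf{0}=(0,\dots,0)$. A $\mathbb{T}$-gain on $G$ is a map $\varphi$ from oriented edges to $\mathbb{T}$ with $\varphi(\overrightarrow{e_{ts}})=\varphi(\overrightarrow{e_{st}})^{-1}$; $A(\Phi)$ for $\Phi=(G,\varphi)$ is the Hermitian matrix with $(s,t)$ entry $\varphi(\overrightarrow{e_{st}})$ if $v_s\sim v_t$, else $0$; $\mathcal{T}_G$ is the set of all $\mathbb{T}$-gain graphs on $G$. The gain of a directed cycle is the product of gains of its oriented edges. A rooted spanning tree $T$ with root $v_r$ induces the tree order ($v_x\le v_y$ iff $v_x$ is on the $T$-path from $v_r$ to $v_y$); $T$ is normal if adjacent vertices of $G$ are always comparable. The suitably oriented graph $\overrightarrow{G_T}$ orients each edge $e_{st}$ with $v_s\le v_t$ as $\overrightarrow{e_{st}}$ if $e_{st}\in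 E(T)$ and as $\overrightarrow{e_{ts}}$ otherwise; the $m-n+1$ fundamental cycles of $T$ become directed cycles $\overrightarrow{C_j(T)}$. For $r=(c_1,\dots,c_{m-n+1})\in\mathbb{I}^{m-n+1}$, $\mathcal{A}_T(r)=\{(G,\varphi)\in\mathcal{T}_G:\varphi(\overrightarrow{C_j(T)})=e^{ic_j}\ \forall j\}$. *)

From mathcomp Require Import all_boot all_order all_algebra.
From mathcomp Require Import complex.
From mathcomp Require Import reals trigo.
Set Implicit Arguments. Unset Strict Implicit. Unset Printing Implicit Defensive.
Import Order.TTheory GRing.Theory Num.Theory.
Local Open Scope ring_scope.
Local Open Scope complex_scope.

Definition simple_graph (n : nat) (G : rel 'I_n) : Prop :=
  symmetric G /\ irreflexive G.

Definition connected_graph (n : nat) (G : rel 'I_n) : Prop :=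
  forall x y, connect G x y.

Definition has_cycle (n : nat) (T : rel 'I_n) : Prop :=
  exists c : seq 'I_n, [/\ 3 <= size c, uniq c & cycle T c]%N.

Definition spanning_tree (n : nat) (G T : rel 'I_n) : Prop :=
  [/\ symmetric T, (forall x y, T x y -> G x y),
      (forall x y, connect T x y) & ~ has_cycle T].

Definition tree_path (n : nat) (T : rel 'I_n) (x y : 'I_n) (p : seq 'I_n) : Prop :=
  [/\ path T x p, last x p = y & uniq (x :: p)].

Definition tree_le (n : nat) (T : rel 'I_n) (rt x y : 'I_n) : Prop :=
  exists p, tree_path T rt y p /\ x \in rt :: p.

Definition normal_tree (n : nat) (G T : rel 'I_n) (rt : 'I_n) : Prop :=
  forall x y, G x y -> tree_le T rt x y \/ tree_le T rt y x.

(* Non-tree edges e_st of G, written as the ordered pair (s,t) with s <= t in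
   the tree order; each determines one fundamental cycle C(s,t). *)
Definition cotree_pair (n : nat) (G T : rel 'I_n) (rt s t : 'I_n) : Prop :=
  [/\ G s t, ~~ T s t & tree_le T rt s t].

(* A T-gain graph on G, given by its values on oriented edges
   (phi x y = gain of the oriented edge from x to y; values on non-edges
   are irrelevant). *)
Definition gain_graph (R : realType) (n : nat) (G : rel 'I_n)
    (phi : 'I_n -> 'I_n -> R[i]) : Prop :=
  forall x y, G x y -> `|phi x y| = 1 /\ phi y x = (phi x y)^-1.

Definition adj_mx (R : realType) (n : nat) (G : rel 'I_n)
    (phi : 'I_n -> 'I_n -> R[i]) : 'M[R[i]]_n :=
  \matrix_(i, j) (if G i j then phi i j else 0).

(* Gain of the directed fundamental cycle of the suitably oriented graph:
   tree path s = v0 -> v1 -> ... -> vk = t (tree edges oriented away from the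
   root), followed by the non-tree edge oriented t -> s. *)
Definition cycle_gain (R : realType) (n : nat) (phi : 'I_n -> 'I_n -> R[i])
    (s t : 'I_n) (p : seq 'I_n) : R[i] :=
  (\prod_(z <- pairmap phi s p) z) * phi t s.

Definition expi (R : realType) (c : R) : R[i] := cos c +i* sin c.

(* Membership in A_T(r); the vector r is indexed by the non-tree edges
   (cotree pairs (s,t)), r s t being the prescribed angle of C(s,t). *)
Definition in_AT (R : realType) (n : nat) (G T : rel 'I_n) (rt : 'I_n)
    (r : 'I_n -> 'I_n -> R) (phi : 'I_n -> 'I_n -> R[i]) : Prop :=
  forall s t p, cotree_pair G T rt s t -> tree_path T s t p ->
    cycle_gain phi s t p = expi (r s t).

(* s = (2pi - r_j) mod 2pi, for r_j in [0, 2pi). *)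
Definition flip_angles (R : realType) (n : nat) (r : 'I_n -> 'I_n -> R) :
    'I_n -> 'I_n -> R :=
  fun s t => if r s t == 0 then 0 else 2 * pi - r s t.

(* Two gain graphs on G whose fundamental cycles with respect to the normal
   spanning tree T rooted at rt carry the same gains are switching equivalent:
   with f x the quotient of their gains along the tree path from rt to x, one
   has psi x y = (f x)^-1 * phi x y * f y on every edge, so the adjacency
   matrices are conjugate by a diagonal matrix.  Normality makes this work on a
   non-tree edge xy: one endpoint lies on the tree path of the other, and the
   remaining tree segment closes the fundamental cycle of xy.  Reversing all
   gains transposes the adjacency matrix and inverts every cycle gain, hence
   maps A_T(s) into A_T(r). *)

From mathcomp Require Import all_boot all_order all_algebra.
From mathcomp Require Import complex.
From mathcomp Require Import reals trigo.
From mathcomp Require Import ring.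
Set Implicit Arguments. Unset Strict Implicit. Unset Printing Implicit Defensive.
Import Order.TTheory GRing.Theory Num.Theory.
Local Open Scope ring_scope.

Section TreePaths.
Variables (n : nat) (T : rel 'I_n).
Implicit Types (x y : 'I_n) (p q : seq 'I_n).

Lemma tree_pathP x y p :
  reflect (tree_path T x y p) [&& path T x p, last x p == y & uniq (x :: p)].
Proof. by apply: (iffP and3P) => -[? /eqP ? ?]. Qed.

Lemma connect_tree_path x y : connect T x y -> exists p, tree_path T x y p.
Proof. by case/connectP=> p /shortenP[q ? ? _] ->; exists q. Qed.

Lemma tree_path_split x y p1 p2 : tree_path T x y (p1 ++ p2) ->
  tree_path T x (last x p1) p1 /\ tree_path T (last x p1) y p2.
Proof.
rewrite /tree_path cat_path last_cat -cat_cons cat_uniq.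
case=> /andP[Tp1 Tp2] Ly /and3P[Up1 disj Up2]; split; split=> //=.
rewrite Up2 andbT; apply: contra disj => ?.
by apply/hasP; exists (last x p1); rewrite ?mem_last.
Qed.

Lemma tree_path_loop x p : tree_path T x x p -> p = [::].
Proof. by case: p => // a p [_ /= <- /andP[]]; rewrite mem_last. Qed.

Hypothesis symT : symmetric T.

Lemma meeting_paths_cycle x p q :
  path T x p -> path T x q -> uniq (x :: p) -> uniq (x :: q) ->
  has (mem q) p -> head x p != head x q -> has_cycle T.
Proof.
move=> + + + + meet; case: (split_find meet) => {meet p} z p1 p2 zq p1Nq.
case/splitPr: zq p1Nq => q1 q2 p1Nq Tp Tq Up Uq hd.
exists (x :: rcons p1 z ++ rev q1); split.
- rewrite /= size_cat size_rcons size_rev.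
  by case: p1 q1 {Tp Tq Up Uq p1Nq} hd => [|? ?] [|? ?] //=; rewrite ?addnS // eqxx.
- move: Up Uq; rewrite -!cat_cons !cat_uniq has_rev rev_uniq [uniq (x :: q1)]cons_uniq.
  case/and3P=> -> _ _ /and3P[/andP[xNq1 Uq1] zNxq1 _]; rewrite Uq1 andbT /=.
  apply/hasPn=> v vq1; rewrite !inE mem_rcons inE.
  apply/negP=> /or3P[/eqP vx | /eqP vz | vp1].
  + by rewrite -vx vq1 in xNq1.
  + by move: zNxq1; rewrite -vz /= !inE vq1 orbT.
  + by case/hasP: p1Nq; exists v; rewrite // inE mem_cat vq1.
- rewrite /cycle /= rcons_cat cat_path last_rcons -rev_cons.
  move: Tp Tq; rewrite !cat_path => /andP[-> _] /andP[Tq1 /andP[Tz _]] /=.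
  have : path T x (rcons q1 z) by rewrite rcons_path Tq1.
  rewrite -(eq_path (e := fun u v => T v u)) => [|u v]; last exact: symT.
  by rewrite -rev_path last_rcons belast_rcons.
Qed.

Hypothesis acyclicT : ~ has_cycle T.

Lemma tree_path_unique x y p q : tree_path T x y p -> tree_path T x y q -> p = q.
Proof.
elim: p x q => [|a p IHp] x [|b q] tp tq //.
- by move: tq; case: tp => _ /= <- _ /tree_path_loop.
- by move: tp; case: tq => _ /= <- _ /tree_path_loop.
- case: (eqVneq a b) tq => [<-|neq_ab] tq.
    congr (_ :: _); apply: IHp.
    + exact: (tree_path_split (p1 := [:: a]) tp).2.
    + exact: (tree_path_split (p1 := [:: a]) tq).2.
  case: tp tq => Tp Lp Up [Tq Lq Uq]; case: acyclicT.
  apply: (meeting_paths_cycle Tp Tq Up Uq) => //; apply/hasP.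
  by exists y; [rewrite -Lp; apply: (mem_last a) | rewrite -Lq; apply: (mem_last b)].
Qed.

End TreePaths.

Section CharPoly.
Variables (F : fieldType) (n : nat).
Implicit Types (A P Q : 'M[F]_n).

Lemma char_poly_trmx A : char_poly A^T = char_poly A.
Proof.
rewrite /char_poly -det_tr; congr (\det _); apply/matrixP => i j.
by rewrite !mxE eq_sym.
Qed.

Lemma char_poly_conj P Q A : P *m Q = 1%:M -> char_poly (P *m A *m Q) = char_poly A.
Proof.
move=> PQ; pose mP := map_mx polyC P; pose mQ := map_mx polyC Q.
have mPQ : mP *m mQ = 1%:M by rewrite -map_mxM PQ map_mx1.
rewrite /char_poly; have -> : char_poly_mx (P *m A *m Q) = mP *m char_poly_mx A *m mQ.
  rewrite /char_poly_mx !map_mxM mulmxBr mulmxBl mul_mx_scalar -scalemxAl mPQ.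
  by rewrite scale_scalar_mx mulr1.
by rewrite !det_mulmx mulrAC -det_mulmx mPQ det1 mul1r.
Qed.

Lemma char_poly_diag_conj A (f : 'I_n -> F) : (forall i, f i != 0) ->
  char_poly (\matrix_(i, j) ((f i)^-1 * A i j * f j)) = char_poly A.
Proof.
move=> f_neq0; pose P := diag_mx (\row_i (f i)^-1); pose Q := diag_mx (\row_i f i).
rewrite -(char_poly_conj A (P := P) (Q := Q)).
  by congr char_poly; apply/matrixP => i j; rewrite mul_mx_diag mul_diag_mx !mxE.
by rewrite mulmx_diag -diag_const_mx; congr diag_mx; apply/rowP => i; rewrite !mxE mulVf.
Qed.

End CharPoly.

Section WalkGain.
Variables (V : Type) (F : fieldType).
Implicit Types (e : rel V) (phi : V -> V -> F) (x y : V) (p : seq V).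

Definition walk_gain phi x p : F := \prod_(z <- pairmap phi x p) z.

Definition invertible_gains e phi :=
  forall x y, e x y -> phi x y != 0 /\ phi y x = (phi x y)^-1.

Definition rev_gain phi : V -> V -> F := fun x y => phi y x.

Lemma walk_gain1 phi x y : walk_gain phi x [:: y] = phi x y.
Proof. exact: big_seq1. Qed.

Lemma walk_gain_cat phi x p1 p2 :
  walk_gain phi x (p1 ++ p2) = walk_gain phi x p1 * walk_gain phi (last x p1) p2.
Proof. by rewrite /walk_gain pairmap_cat big_cat. Qed.

Lemma walk_gain_neq0 e phi x p :
  invertible_gains e phi -> path e x p -> walk_gain phi x p != 0.
Proof.
move=> gphi; elim: p x => [|y p IHp] x /=; first by rewrite /walk_gain big_nil oner_neq0.
case/andP=> exy ep; rewrite /walk_gain /= big_cons mulf_neq0 ?IHp //.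
exact: (gphi _ _ exy).1.
Qed.

Lemma walk_gain_rev e phi x p : invertible_gains e phi -> path e x p ->
  walk_gain (rev_gain phi) x p = (walk_gain phi x p)^-1.
Proof.
move=> gphi; elim: p x => [|y p IHp] x /=; first by rewrite /walk_gain big_nil invr1.
case/andP=> exy ep; rewrite /walk_gain /= !big_cons invfM -!/(walk_gain _ _ _) IHp //.
by rewrite /rev_gain (gphi _ _ exy).2.
Qed.

Lemma invertible_gains_rev e phi :
  symmetric e -> invertible_gains e phi -> invertible_gains e (rev_gain phi).
Proof. by move=> esym gphi x y; rewrite esym; apply: gphi. Qed.

End WalkGain.

Lemma gain_graph_invertible (R : realType) n (G : rel 'I_n) (phi : 'I_n -> 'I_n -> R[i]) :
  gain_graph G phi -> invertible_gains G phi.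
Proof. by move=> gphi x y /gphi[phi1 ->]; rewrite -normr_eq0 phi1 oner_neq0. Qed.

Section Expi.
Variable R : realType.

Lemma expiD (a b : R) : expi (a + b) = expi a * expi b.
Proof.
by rewrite /expi cosD sinD; apply/eqP; rewrite eq_complex /= eqxx addrC eqxx.
Qed.

Lemma expi_flip_angles n (r : 'I_n -> 'I_n -> R) s t :
  expi (flip_angles r s t) = (expi (r s t))^-1.
Proof.
rewrite /flip_angles; case: eqP => [->|_].
  by rewrite /expi cos0 sin0 invr1.
by apply/esym/mulr1_eq; rewrite -expiD addrC subrK /expi mulr_natl cos2pi sin2pi.
Qed.

End Expi.

Section Switching.
Variables (R : realType) (n : nat) (G T : rel 'I_n) (rt : 'I_n).
Hypotheses (symG : symmetric G) (irrG : irreflexive G).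
Hypotheses (symT : symmetric T) (subTG : subrel T G).
Hypotheses (connT : forall x y, connect T x y) (acyclicT : ~ has_cycle T).
Hypothesis normT : normal_tree G T rt.
Variables phi psi : 'I_n -> 'I_n -> R[i].
Hypotheses (gphi : invertible_gains G phi) (gpsi : invertible_gains G psi).
Hypothesis same_cycle_gains : forall s t p,
  cotree_pair G T rt s t -> tree_path T s t p -> cycle_gain phi s t p = cycle_gain psi s t p.

Lemma root_path_exists x : exists p, [&& path T rt p, last rt p == x & uniq (rt :: p)].
Proof. by have [p /tree_pathP] := connect_tree_path (connT rt x); exists p. Qed.

Definition root_path x := xchoose (root_path_exists x).

Lemma root_pathP x : tree_path T rt x (root_path x).
Proof. exact/tree_pathP/(xchooseP (root_path_exists x)). Qed.

Definition switch_fun x := walk_gain psi rt (root_path x) / walk_gain phi rt (root_path x).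

Lemma switch_fun_neq0 x : switch_fun x != 0.
Proof.
have [/(sub_path subTG) Gp _ _] := root_pathP x.
by rewrite mulf_neq0 ?invr_neq0 ?(walk_gain_neq0 gphi Gp) ?(walk_gain_neq0 gpsi Gp).
Qed.

Lemma descending_edge_gains x y p : G x y -> tree_le T rt x y -> tree_path T x y p ->
  psi x y * walk_gain phi x p = phi x y * walk_gain psi x p.
Proof.
move=> Gxy le_xy txy; case Txy: (T x y).
  have -> : p = [:: y].
    apply: (tree_path_unique symT acyclicT txy); split; rewrite /= ?Txy //.
    by rewrite inE andbT; apply: contraTneq Gxy => ->; rewrite irrG.
  by rewrite !walk_gain1 mulrC.
have cp : cotree_pair G T rt x y by split; rewrite ?Txy.
have := same_cycle_gains cp txy; rewrite /cycle_gain -!/(walk_gain _ _ _).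
have [phi_neq0 ->] := gphi Gxy; have [psi_neq0 ->] := gpsi Gxy.
by move/eqP; rewrite eqr_div // => /eqP; rewrite mulrC => ->; rewrite mulrC.
Qed.

Lemma switch_fun_descending x y : G x y -> tree_le T rt x y ->
  psi x y = (switch_fun x)^-1 * phi x y * switch_fun y.
Proof.
move=> Gxy le_xy; case: (le_xy) => p [+ xp]; case/splitPl: xp => p1 p2 Lx tp.
have [tp1 tp2] := tree_path_split tp; rewrite Lx in tp1 tp2.
rewrite /switch_fun (tree_path_unique symT acyclicT (root_pathP x) tp1).
rewrite (tree_path_unique symT acyclicT (root_pathP y) tp) !walk_gain_cat Lx.
have [/(sub_path subTG) Gp1 _ _] := tp1; have [/(sub_path subTG) Gp2 _ _] := tp2.
have ratio := descending_edge_gains Gxy le_xy tp2.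
rewrite -[psi x y](mulfK (walk_gain_neq0 gphi Gp2)) ratio.
by field; rewrite (walk_gain_neq0 gphi Gp2) (walk_gain_neq0 gphi Gp1) (walk_gain_neq0 gpsi Gp1).
Qed.

Lemma switch_fun_edge x y : G x y -> psi x y = (switch_fun x)^-1 * phi x y * switch_fun y.
Proof.
move=> Gxy; case: (normT Gxy) => le; first exact: switch_fun_descending.
have := switch_fun_descending (etrans (symG y x) Gxy) le.
have [_ ->] := gphi Gxy; have [_ ->] := gpsi Gxy.
move: (switch_fun x) (switch_fun y) => fx fy.
by move/(congr1 GRing.inv); rewrite invrK => ->; rewrite !invfM !invrK; ring.
Qed.

Lemma adj_mx_switch :
  adj_mx G psi = \matrix_(i, j) ((switch_fun i)^-1 * adj_mx G phi i j * switch_fun j).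
Proof.
apply/matrixP => i j; rewrite !mxE.
by case: ifP => [/switch_fun_edge // | _]; rewrite mulr0 mul0r.
Qed.

Lemma char_poly_switching : char_poly (adj_mx G phi) = char_poly (adj_mx G psi).
Proof. by rewrite adj_mx_switch char_poly_diag_conj //; apply: switch_fun_neq0. Qed.

End Switching.

Section Reversal.
Variables (R : realType) (n : nat) (G T : rel 'I_n) (rt : 'I_n).
Hypotheses (symG : symmetric G) (subTG : subrel T G).
Implicit Type phi : 'I_n -> 'I_n -> R[i].

Lemma adj_mx_rev_gain phi : adj_mx G (rev_gain phi) = (adj_mx G phi)^T.
Proof. by apply/matrixP => i j; rewrite !mxE symG. Qed.

Lemma cycle_gain_rev_gain phi s t p : invertible_gains G phi -> G s t -> path T s p ->
  cycle_gain (rev_gain phi) s t p = (cycle_gain phi s t p)^-1.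
Proof.
move=> gphi Gst /(sub_path subTG) Gp; rewrite /cycle_gain -!/(walk_gain _ _ _).
rewrite (walk_gain_rev gphi Gp) invfM; congr (_ * _).
by rewrite symG in Gst; rewrite /rev_gain (gphi t s Gst).2.
Qed.

Lemma in_AT_rev_gain r phi : invertible_gains G phi ->
  in_AT G T rt (flip_angles r) phi -> in_AT G T rt r (rev_gain phi).
Proof.
move=> gphi A s t p cp tp; have [Gst _ _] := cp; have [Tp _ _] := tp.
by rewrite cycle_gain_rev_gain // A // expi_flip_angles invrK.
Qed.

End Reversal.

Theorem lemma3p3 (R : realType) (n : nat) (G T : rel 'I_n) (rt : 'I_n)
    (r : 'I_n -> 'I_n -> R) :
  simple_graph G -> connected_graph G ->
  spanning_tree G T -> normal_tree G T rt ->
  (forall s t, cotree_pair G T rt s t -> 0 <= r s t < 2 * pi) ->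
  (exists s t, cotree_pair G T rt s t /\ r s t != 0) ->
  forall phi1 phi2 : 'I_n -> 'I_n -> R[i],
    gain_graph G phi1 -> gain_graph G phi2 ->
    (in_AT G T rt r phi1 \/ in_AT G T rt (flip_angles r) phi1) ->
    (in_AT G T rt r phi2 \/ in_AT G T rt (flip_angles r) phi2) ->
    char_poly (adj_mx G phi1) = char_poly (adj_mx G phi2).
Proof.
move=> [symG irrG] _ [symT subTG connT acyclicT] normT _ _ phi1 phi2.
move=> /gain_graph_invertible g1 /gain_graph_invertible g2.
have reduce phi : invertible_gains G phi ->
    in_AT G T rt r phi \/ in_AT G T rt (flip_angles r) phi ->
  exists2 psi, invertible_gains G psi /\ in_AT G T rt r psi &
    char_poly (adj_mx G phi) = char_poly (adj_mx G psi).
  move=> gphi [A|A]; first by exists phi.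
  exists (rev_gain phi); last by rewrite adj_mx_rev_gain // char_poly_trmx.
  by split; [apply: invertible_gains_rev | apply: in_AT_rev_gain].
case/(reduce _ g1) => psi1 [gpsi1 A1] ->; case/(reduce _ g2) => psi2 [gpsi2 A2] ->.
apply: (char_poly_switching symG irrG symT subTG connT acyclicT normT gpsi1 gpsi2).
by move=> s t p cp tp; rewrite A1 ?A2.
Qed.
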